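(* For every non-trivial projective core $H$ there exist a graph $F$ and two vertices $u^*,v^*\in V(F)$ such that: (a) for all $x,y\in V(H)$ with $x\ne y$ there is a homomorphism $f\colon F\to H$ with $f(u^* )=x$ and $f(v^* )=y$; (b) every homomorphism $f\colon F\to H$ satisfies $f(u^* )\ne f(v^* )$.
   Context: Graphs are finite, undirected, without parallel edges, loops allowed; $K_1^*$ is the one-vertex graph with a loop. A homomorphism is an edge-preserving vertex map. A core is a graph with no homomorphism to a proper subgraph of itself; a core is trivial if isomorphic to $K_1$, $K_1^*$ or $K_2$, non-trivial otherwise. The direct product $H_1\times H_2$ has vertex set $V(H_1)\times V(H_2)$ with $(x_1,y_1)(x_2,y_2)$ an edge iff $x_1x_2\in E(H_1)$ and $y_1y_2\in E(H_2)$; $H^m$ is the $m$-fold product and $\pi_i(x_1,\dots,x_m)=x_i$. A homomorphism $f\colon H^m\to H$ is idempotent if $f(x,\dots,x)=x$ for all $x$. $H$ is projective if for every $m\ge2$ every idempotent homomorphism $H^m\to H$ equals some $\pi_i$. *)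

From mathcomp Require Import all_boot.
Set Implicit Arguments. Unset Strict Implicit. Unset Printing Implicit Defensive.

Record graph := Graph {
  vert :> finType;
  adj : rel vert;
  adj_sym : symmetric adj }.

Arguments adj {g}.

Definition hom (G H : graph) (f : G -> H) : Prop :=
  forall x y : G, adj x y -> adj (f x) (f y).

Definition isomorphic (G H : graph) : Prop :=
  exists f : G -> H, bijective f /\ forall x y : G, adj (f x) (f y) = adj x y.

(* Core: no homomorphism G -> G' where G' = (A, E) is a proper subgraph of G
   (A a vertex subset, E a symmetric edge set with endpoints in A and E ⊆ E(G),
   and (A, E) differs from G). *)
Definition is_core (G : graph) : Prop :=
  ~ exists (A : {set G}) (E : rel G) (f : G -> G),
      symmetric E /\
      (forall x y, E x y -> [&& x \in A, y \in A & adj x y]) /\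
      (A != setT \/ exists x y, adj x y && ~~ E x y) /\
      (forall x, f x \in A) /\
      (forall x y, adj x y -> E (f x) (f y)).

Lemma K1_sym : symmetric (fun _ _ : 'I_1 => false). Proof. by []. Qed.
Definition K1 : graph := Graph K1_sym.
Lemma K1s_sym : symmetric (fun _ _ : 'I_1 => true). Proof. by []. Qed.
Definition K1star : graph := Graph K1s_sym.
Lemma K2_sym : symmetric (fun x y : 'I_2 => x != y).
Proof. by move=> x y; rewrite eq_sym. Qed.
Definition K2 : graph := Graph K2_sym.

Definition trivial_core (G : graph) : Prop :=
  isomorphic G K1 \/ isomorphic G K1star \/ isomorphic G K2.

Lemma pow_sym (H : graph) (m : nat) :
  symmetric (fun x y : {ffun 'I_m -> H} => [forall i, adj (x i) (y i)]).
Proof.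
move=> x y; apply/forallP/forallP => h i; by rewrite adj_sym.
Qed.
Definition gpow (H : graph) (m : nat) : graph := Graph (@pow_sym H m).

Definition projective (H : graph) : Prop :=
  forall (m : nat) (f : gpow H m -> H), 2 <= m ->
    hom f -> (forall x : H, f [ffun => x] = x) ->
    exists i : 'I_m, forall x : gpow H m, f x = x i.

From mathcomp Require Import all_boot.
From mathcomp Require Import all_fingroup.
Set Implicit Arguments. Unset Strict Implicit. Unset Printing Implicit Defensive.

(* Let D be the set of ordered pairs (x, y) of distinct vertices of H and take
   F := H^|D|, with u (resp. v) the vertex whose coordinate at (x, y) is x
   (resp. y).  Part (a) is witnessed by the coordinate projections.  For (b),
   let f : F -> H be a homomorphism.  Its restriction to the diagonal is an
   endomorphism of the core H, hence an automorphism s; composing f with a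
   suitable power of s (the inverse of s) gives an idempotent homomorphism,
   which by projectivity is a projection onto some pair (x, y) with x != y.
   Hence f u = s x != s y = f v.  Projectivity needs |D| >= 2, which holds
   because a non-trivial core has at least two vertices. *)

Lemma iter_hom (H : graph) (s : H -> H) (n : nat) : hom s -> hom (iter n s).
Proof. by move=> hs; elim: n => [|n IH] //= x y xy; apply/hs/IH. Qed.

(* Every endomorphism of a core is injective: otherwise its image, with the
   edges of H inside it, is a proper subgraph onto which H maps. *)
Lemma core_endo_inj (H : graph) (s : H -> H) :
  is_core H -> hom s -> injective s.
Proof.
move=> Hcore hs.
have im_full : s @: setT = setT.
  apply/eqP; apply/negPn/negP => im_proper; apply: Hcore.
  exists (s @: setT), (fun a b => [&& a \in s @: setT, b \in s @: setT & adj a b]), s.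
  split; first by move=> a b; rewrite adj_sym andbCA.
  split; first by [].
  split; first by left.
  split; first by move=> x; apply: imset_f.
  by move=> x y xy; rewrite !imset_f ?inE // hs.
have /imset_injP s_inj : #|s @: setT| == #|[set: H]| by rewrite im_full.
by move=> x y sxy; apply: s_inj; rewrite ?inE.
Qed.

(* Every endomorphism s of a core is an automorphism: some iterate t of s
   (namely s^(k-1), with k the order of s as a permutation) inverts it on
   both sides. *)
Lemma core_endo_inverse (H : graph) (s : H -> H) :
  is_core H -> hom s ->
  exists t : H -> H, [/\ hom t, forall x, t (s x) = x & forall x, s (t x) = x].
Proof.
move=> Hcore hs.
pose p := perm (core_endo_inj Hcore hs).
have pE : forall x, p x = s x by move=> x; rewrite permE.
have k_gt0 : 0 < #[p]%g by apply: order_gt0.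
have iter_order : forall x, iter #[p]%g s x = x.
  by move=> x; rewrite -(eq_iter pE) -permX expg_order perm1.
exists (iter #[p]%g.-1 s); split; first exact: iter_hom.
  by move=> x; rewrite -iterSr prednK.
by move=> x; rewrite -iterS prednK.
Qed.

Lemma one_vertex_trivial (G : graph) (x0 : G) :
  (forall y : G, y = x0) -> trivial_core G.
Proof.
move=> all_x0.
have bij : bijective (fun _ : G => @ord0 0).
  by exists (fun _ => x0) => z; [rewrite -(all_x0 z) | rewrite (ord1 z)].
have adjE : forall x y : G, adj x y = adj x0 x0.
  by move=> x y; rewrite (all_x0 x) (all_x0 y).
case: (boolP (adj x0 x0)) => loop; [right; left | left];
  exists (fun _ => ord0); split => // x y; rewrite adjE ?loop //.
by rewrite (negbTE loop).
Qed.

Definition offdiag (T : finType) : {set T * T} := [set p | p.1 != p.2].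

Lemma offdiag_card (T : finType) (x y : T) : x != y -> 1 < #|offdiag T|.
Proof.
move=> xy; apply/card_gt1P; exists (x, y), (y, x).
rewrite !inE /= xy eq_sym xy; split => //.
by apply/negP => /eqP [] /eqP; rewrite (negbTE xy).
Qed.

Lemma proj_hom (H : graph) (m : nat) (i : 'I_m) :
  hom (fun w : gpow H m => w i).
Proof. by move=> a b /forallP. Qed.

Lemma diag_hom (H : graph) (m : nat) :
  hom (fun x : H => ([ffun => x] : gpow H m)).
Proof. by move=> a b ab; apply/forallP => i; rewrite !ffunE. Qed.

(* Over a projective core, every homomorphism H^m -> H (m >= 2) is a
   projection followed by an automorphism s, namely its diagonal restriction. *)
Lemma power_hom_structure (H : graph) (m : nat) (f : gpow H m -> H) :
  is_core H -> projective H -> 2 <= m -> hom f ->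
  exists (s : H -> H) (i : 'I_m), injective s /\ forall w, f w = s (w i).
Proof.
move=> Hcore Hproj m2 homf.
pose s := fun x : H => f [ffun => x].
have hs : hom s by move=> a b ab; apply/homf/diag_hom.
have [t [ht tsK stK]] := core_endo_inverse Hcore hs.
have htf : hom (t \o f) by move=> a b ab; apply/ht/homf.
have [i Hi] := Hproj m (t \o f) m2 htf (fun x => tsK x).
exists s, i; split; first exact: core_endo_inj Hcore hs.
by move=> w; rewrite -Hi /= stK.
Qed.

Theorem lemma9 (H : graph) :
  is_core H -> ~ trivial_core H -> projective H ->
  exists (F : graph) (u v : F),
    (forall x y : H, x != y ->
       exists f : F -> H, hom f /\ f u = x /\ f v = y) /\
    (forall f : F -> H, hom f -> f u != f v).
Proof.
move=> Hcore Hntriv Hproj.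
pose F := gpow H #|offdiag H|.
pose u : F := [ffun i => (enum_val i).1].
pose v : F := [ffun i => (enum_val i).2].
exists F, u, v; split.
  move=> x y xy.
  have Dxy : (x, y) \in offdiag H by rewrite inE.
  exists (fun w : F => w (enum_rank_in Dxy (x, y))); split; first exact: proj_hom.
  by rewrite !ffunE enum_rankK_in.
move=> f homf.
have m2 : 2 <= #|offdiag H|.
  case: (pickP (fun y => y != f u)) => [y ny | all_fu]; first exact: offdiag_card ny.
  case: Hntriv; apply: (one_vertex_trivial (x0 := f u)) => y.
  by apply/eqP; rewrite -[_ == _]negbK all_fu.
have [s [i [s_inj fE]]] := power_hom_structure Hcore Hproj m2 homf.
rewrite !fE !ffunE (inj_eq s_inj).
by have := enum_valP i; rewrite inE.
Qed.
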